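(* The action of $\mathfrak{gl}(\mathring{\mathfrak g})[t,t^{-1}]\rtimes\mathbb C\mathsf D$ on $\overline{\mathrm{Der}}\,\mathcal O$ given by $x\cdot v=[\iota(x),v]$ stabilizes the Lie subalgebra $\mathrm{Der}_w\mathcal O$.
   Context: $\mathring{\mathfrak g}$ is a finite-dimensional simple complex Lie algebra with basis $\{J_a\}_{a\in\mathcal I}$ ($\mathcal I$ finite). $\mathcal O=\mathbb C[X^{a,n}]_{(a,n)\in\mathcal I\times\mathbb Z}$, $D_{a,n}=\partial/\partial X^{a,n}$, $\overline{\mathrm{Der}}\,\mathcal O$ is the Lie algebra of possibly infinite formal sums $\sum_{(a,n)}P^{a,n}(X)D_{a,n}$ (bracket as commutator of derivations; each coefficient a finite sum). A collection $\{P^{a,n}\}$ has widening gap if for every $K\ge1$, $P^{a,n}\in\mathbb C[X^{b,m}:|m|<|n|-K]$ for all $a$, for all but finitely many $n\in\mathbb Z$; $\mathrm{Der}_w\mathcal O$ is the Lie subalgebra of sums with widening-gap coefficients. The loop algebra $\mathfrak{gl}(\mathring{\mathfrak g})[t,t^{-1}]$ has basis $S^a_{b,n}$ ($a,b\in\mathcal I$, $n\in\mathbb Z$) with $[S^a_{b,n},S^c_{d,m}]=\delta^c_bS^a_{d,n+m}-\delta^a_dS^c_{b,n+m}$, and $\mathsf D$ is the derivation with $[\mathsf D,S^a_{b,n}]=nS^a_{b,n}$. The embedding $\iota:\mathfrak{gl}(\mathring{\mathfrak g})[t,t^{-1}]\rtimes\mathbb C\mathsf D\hookrightarrow\overline{\mathrm{Der}}\,\mathcal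 O$ is $\iota(S^b_{c,n})=\sum_{m\in\mathbb Z}X^{b,m-n}D_{c,m}$, $\iota(\mathsf D)=\sum_{a\in\mathcal I,m\in\mathbb Z}mX^{a,m}D_{a,m}$. *)

From HB Require Import structures.
From mathcomp Require Import all_boot all_order all_algebra.
From mathcomp Require Import finmap.
From mathcomp Require Import reals.
From mathcomp Require Import complex.
From mathcomp Require Import monalg.

Set Implicit Arguments.
Unset Strict Implicit.
Unset Printing Implicit Defensive.

Import Order.TTheory GRing.Theory Num.Theory.
Local Open Scope ring_scope.

Section Defs.
Variables (R : realType) (I : finType).

Definition CC : Type := R[i].

(* Index set of the variables X^{a,n}, (a,n) in I x Z. *)
Definition Var : choiceType := (I * int)%type.

(* O = C[X^{a,n}] : commutative polynomials in the variables Var. *)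
Definition O := {malg CC[cmonom Var]}.

Definition Xv (v : Var) : O := << ucm v >>.

(* The partial derivative D_v = d/dX^v on O. *)
Definition deriv (v : Var) (p : O) : O :=
  \sum_(m <- msupp p) << (p@_m * (cmonom_val m v)%:R)
                          *g divcm m (ucm v) >>.

Definition vars (p : O) : seq Var :=
  undup (flatten [seq (finsupp (cmonom_val m) : seq Var)
                 | m <- (msupp p : seq (cmonom Var))]).

(* Elements of \overline{Der} O : formal sums  sum_v P^v D_v, i.e. the
   family of coefficients v |-> P^v. *)
Definition Derbar := Var -> O.

(* Commutator bracket of derivations:
   [P, Q]^w = sum_v (P^v D_v Q^w - Q^v D_v P^w); only the finitely many
   variables occurring in Q^w (resp. P^w) contribute. *)
Definition bracket (P Q : Derbar) : Derbar := fun w =>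
  \sum_(v <- vars (Q w)) P v * deriv v (Q w)
  - \sum_(v <- vars (P w)) Q v * deriv v (P w).

(* p lies in C[X^{b,m} : S m], the subring generated by the variables
   whose integer index satisfies S. *)
Definition poly_in (S : int -> Prop) (p : O) : Prop :=
  forall m, m \in msupp p ->
  forall v : Var, v \in finsupp (cmonom_val m) -> S v.2.

Definition widening_gap (P : Derbar) : Prop :=
  forall K : nat, (1 <= K)%N ->
  exists s : seq int, forall n : int, n \notin s ->
  forall a : I, poly_in (fun m => `|m| < `|n| - (K%:Z)) (P (a, n)).

(* The Lie algebra gl(g)[t,t^-1] >< C D as a vector space: an element is
   sum_{(b,c,n)} f_{b,c,n} S^b_{c,n} + mu D, with f finitely supported. *)
Definition loopD := ({malg CC[(I * I * int)%type]} * CC)%type.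

(* The embedding iota, extended linearly:
   iota(S^b_{c,n}) = sum_m X^{b,m-n} D_{c,m},
   iota(D) = sum_{a,m} m X^{a,m} D_{a,m}. *)
Definition iota_emb (x : loopD) : Derbar := fun w =>
  \sum_(k <- (msupp x.1 : seq _) | k.1.2 == w.1)
      (x.1)@_k *: Xv (k.1.1, w.2 - k.2)
  + (x.2 * (w.2)%:~R) *: Xv w.

End Defs.

(* The coefficients of iota(x) are linear forms, and the coefficient at D_{a,n}
   only involves variables whose integer index differs from n by one of the
   finitely many shifts k occurring in x, so that |index| <= |n| + M with M the
   sum of the |k|.  In the bracket [iota(x), Q]^{a,n} the term
   iota(x)^v D_v Q^{a,n} therefore inherits the gap of Q^{a,n} up to the
   constant M, while in Q^v D_v iota(x)^{a,n} the derivative is a constant and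
   Q^v has a gap relative to |v.2| <= |n| + M.  A gap K + M for Q thus yields a
   gap K for the bracket, outside the finite set of n that are exceptional for
   Q or differ from an exceptional index by a shift. *)
From Pilot Require Import Defs.
From HB Require Import structures.
From mathcomp Require Import all_boot all_order all_algebra.
From mathcomp Require Import finmap reals complex monalg.
Import Order.TTheory GRing.Theory Num.Theory.
Local Open Scope ring_scope.

Section SupportedOn.
Context {K : choiceType} {G : nzRingType}.
Variable A : K -> Prop.
Implicit Types g h : {malg G[K]}.

Definition supported_on g : Prop := forall k, k \in msupp g -> A k.

Lemma supported_on0 : supported_on 0.
Proof. by move=> k; rewrite msupp0 in_fset0. Qed.

Lemma supported_onD g h : supported_on g -> supported_on h -> supported_on (g + h).
Proof.
move=> Ag Ah k /(fsubsetP (msuppD_le _ _)); rewrite in_fsetU => /orP[].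
- exact: Ag.
- exact: Ah.
Qed.

Lemma supported_onN g : supported_on g -> supported_on (- g).
Proof. by move=> Ag k; rewrite msuppN; apply: Ag. Qed.

Lemma supported_onB g h : supported_on g -> supported_on h -> supported_on (g - h).
Proof. by move=> Ag Ah; apply: supported_onD => //; apply: supported_onN. Qed.

Lemma supported_onZ c g : supported_on g -> supported_on (c *: g).
Proof. by move=> Ag k /(fsubsetP (msuppZ_le _ _)); apply: Ag. Qed.

Lemma supported_onU c k : A k -> supported_on << c *g k >>.
Proof. by move=> Ak k' /(fsubsetP msuppU_le); rewrite in_fset1 => /eqP ->. Qed.

Lemma supported_on_sum (T : eqType) (r : seq T) (P : pred T) (F : T -> {malg G[K]}) :
  (forall i, i \in r -> P i -> supported_on (F i)) ->
  supported_on (\sum_(i <- r | P i) F i).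
Proof.
move=> AF; rewrite big_seq_cond; elim/big_ind: _ => //.
- exact: supported_on0.
- exact: supported_onD.
- by move=> i /andP[]; apply: AF.
Qed.

End SupportedOn.

Section PolyIn.
Context {R : realType} {I : finType}.
Implicit Types (S : int -> Prop) (p q : O R I) (u v : Var I).

Lemma poly_inW {S S' p} : (forall i, S i -> S' i) -> poly_in S p -> poly_in S' p.
Proof. by move=> SS' Sp m /Sp Sm v /Sm; apply: SS'. Qed.

Lemma poly_inM S p q : poly_in S p -> poly_in S q -> poly_in S (p * q).
Proof.
move=> Sp Sq m /msuppM_le [m1 [m2 [m1p m2q ->]]] v.
rewrite mdomD in_fsetU => /orP[].
- exact: Sp.
- exact: Sq.
Qed.

Lemma poly_inX S u : S u.2 -> poly_in S (Xv R u).
Proof. by move=> Su; apply: supported_onU => v; rewrite mdomU in_fset1 => /eqP ->. Qed.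

Lemma poly_in_vars {S p v} : poly_in S p -> v \in vars p -> S v.2.
Proof.
by move=> Sp; rewrite mem_undup => /flattenP [_ /mapP [m mp ->]]; apply: Sp.
Qed.

Lemma poly_in_deriv {S} v {p} : poly_in S p -> poly_in S (Defs.deriv v p).
Proof.
move=> Sp; apply: supported_on_sum => m mp _; apply: supported_onU => u.
rewrite -cmE_neq0 divcmE => u_m; apply: (Sp m mp).
by rewrite -cmE_neq0; apply: contra u_m => /eqP ->.
Qed.

Lemma poly_in_bracket S (P Q : Derbar R I) w :
  (forall v, v \in vars (Q w) -> poly_in S (P v * Defs.deriv v (Q w))) ->
  (forall v, v \in vars (P w) -> poly_in S (Q v * Defs.deriv v (P w))) ->
  poly_in S (bracket P Q w).
Proof.
by move=> SPQ SQP; apply: supported_onB; apply: supported_on_sum => v vw _;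
  [apply: SPQ | apply: SQP].
Qed.

Definition linear_poly p : Prop := supported_on (fun m => exists u, m = ucm u) p.

Lemma linear_polyX u : linear_poly (Xv R u).
Proof. by apply: supported_onU; exists u. Qed.

Lemma poly_in_deriv_linear S v p : linear_poly p -> poly_in S (Defs.deriv v p).
Proof.
move=> lin_p; apply: supported_on_sum => _ /lin_p [u ->] _.
have [<-|neq_uv] := eqVneq u v.
- by apply: supported_onU => w; rewrite -cmE_neq0 divcmE subnn eqxx.
- by rewrite ucmE (negPf neq_uv) mulr0 monalgU0; apply: supported_on0.
Qed.

End PolyIn.

Section IotaEmb.
Context {R : realType} {I : finType}.
Variable x : loopD R I.

Definition shift_bound : int := \sum_(k <- msupp x.1) `|k.2|.

Lemma shift_bound_ge k : k \in msupp x.1 -> `|k.2| <= shift_bound.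
Proof.
move=> kx; rewrite /shift_bound (bigD1_seq k) ?fset_uniq //=.
by rewrite lerDl sumr_ge0.
Qed.

Lemma shift_bound_ge0 : 0 <= shift_bound.
Proof. exact: sumr_ge0. Qed.

Definition shifted_index (n i : int) : Prop :=
  i = n \/ exists2 k, k \in msupp x.1 & i = n - k.2.

Lemma linear_iota_emb w : linear_poly (iota_emb x w).
Proof.
apply: supported_onD; last by apply: supported_onZ; apply: linear_polyX.
by apply: supported_on_sum => k _ _; apply: supported_onZ; apply: linear_polyX.
Qed.

Lemma poly_in_iota_emb w : poly_in (shifted_index w.2) (iota_emb x w).
Proof.
apply: supported_onD; last by apply: supported_onZ; apply: poly_inX; left.
apply: supported_on_sum => k kx _; apply: supported_onZ; apply: poly_inX.
by right; exists k.
Qed.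

Lemma shifted_index_norm {n i} : shifted_index n i -> `|i| <= `|n| + shift_bound.
Proof.
case=> [->|[k /shift_bound_ge kM ->]].
- by rewrite lerDl shift_bound_ge0.
- by apply: le_trans (ler_normB _ _) _; rewrite lerD2l.
Qed.

Lemma poly_in_iota_mul_deriv (t : int) (q : O R I) v :
  poly_in (fun i => `|i| < t - shift_bound) q -> v \in vars q ->
  poly_in (fun i => `|i| < t) (iota_emb x v * Defs.deriv v q).
Proof.
move=> tq vq.
have v_lt : `|v.2| + shift_bound < t by rewrite -ltrBrDr; apply: poly_in_vars tq vq.
apply: poly_inM.
- by apply: poly_inW (poly_in_iota_emb v) => i /shifted_index_norm /le_lt_trans; apply.
- apply: poly_inW (poly_in_deriv v tq) => i /lt_le_trans; apply.
  by rewrite lerBlDr lerDl shift_bound_ge0.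
Qed.

End IotaEmb.

Theorem lemma3p6 (R : realType) (I : finType) (x : loopD R I) (v : Derbar R I) :
  widening_gap v -> widening_gap (bracket (iota_emb x) v).
Proof.
move=> gap_v K K_ge1; set M := shift_bound x.
have M0 : 0 <= M := shift_bound_ge0 x.
have [s gap_s] := gap_v (K + `|M|)%N (leq_trans K_ge1 (leq_addr _ _)).
have KM : (K + `|M|)%N%:Z = K%:Z + M by rewrite PoszD abszE ger0_norm.
exists (s ++ [seq j + k.2 | j <- s, k <- msupp x.1]) => n.
rewrite mem_cat negb_or => /andP[n_s n_shift] a.
apply: poly_in_bracket => [w wv | [b j] wx].
- apply: poly_in_iota_mul_deriv wv.
  by apply: poly_inW (gap_s n n_s a) => i; rewrite KM opprD addrA.
- have /= j_shift := poly_in_vars (poly_in_iota_emb x (a, n)) wx.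
  have j_s : j \notin s.
    case: j_shift => [->|[k kx ->]] //; apply: contra n_shift => j_s.
    rewrite -[n](subrK k.2).
    exact: (allpairs_f (fun i (k : I * I * int) => i + k.2)).
  apply: poly_inM; last exact: poly_in_deriv_linear (linear_iota_emb x _).
  have j_le := shifted_index_norm x j_shift.
  apply: poly_inW (gap_s j j_s b) => i; rewrite KM => /lt_le_trans; apply.
  by rewrite lerBlDr addrA subrK.
Qed.
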